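(* Let $N\ge 2$, $\lambda\neq 0$, and for $x,p\in\mathbb{C}^N$ set $$L_k(x,p;\lambda)=\begin{pmatrix}1+\lambda p_k & -\lambda^2e^{x_k}\\ e^{-x_k} & 0\end{pmatrix},\qquad T_N(x,p;\lambda)=L_N(x,p;\lambda)\cdots L_2(x,p;\lambda)L_1(x,p;\lambda).$$ (a) Periodic case: if $\widetilde{x}\in\mathbb{C}^N$ satisfies $p_k=\frac{1}{\lambda}\big(e^{\widetilde{x}_k-x_k}-1\big)+\lambda e^{x_k-\widetilde{x}_{k-1}}$ for $k=1,\dots,N$ with $\widetilde x_0=\widetilde x_N$, then $\prod_{k=1}^Ne^{\widetilde{x}_k-x_k}$ is an eigenvalue of $T_N(x,p;\lambda)$. (b) Open-end case: if $\widetilde{x}\in\mathbb{C}^N$ satisfies $p_1=\frac{1}{\lambda}\big(e^{\widetilde{x}_1-x_1}-1\big)$ and $p_k=\frac{1}{\lambda}\big(e^{\widetilde{x}_k-x_k}-1\big)+\lambda e^{x_k-\widetilde{x}_{k-1}}$ for $k=2,\dots,N$, then $\prod_{k=1}^Ne^{\widetilde{x}_k-x_k}$ equals the $(1,1)$-entry of $T_N(x,p;\lambda)$.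
   Context: The relation between $(x,p)$ and $\widetilde x$ is the first half of the Bäcklund transformation $F_\lambda$ of the Toda lattice $\ddot x_k=e^{x_{k+1}-x_k}-e^{x_k-x_{k-1}}$ (periodic, resp. open-end boundary conditions). *)

From HB Require Import structures.
From mathcomp Require Import all_boot all_order all_algebra.
From mathcomp Require Import complex.
From mathcomp Require Import reals sequences exp trigo.
Set Implicit Arguments. Unset Strict Implicit. Unset Printing Implicit Defensive.
Import Order.TTheory GRing.Theory Num.Theory.
Local Open Scope ring_scope.
Local Open Scope complex_scope.

Definition cexp (R : realType) (z : R[i]) : R[i] :=
  (expR (complex.Re z) * cos (complex.Im z)) +i* (expR (complex.Re z) * sin (complex.Im z)).

(* Lax matrix L_k(x,p;lambda); sequences indexed by nat, entries 1..N used *)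
Definition Lmat (R : realType) (x p : nat -> R[i]) (lam : R[i]) (k : nat)
  : 'M[R[i]]_2 :=
  \matrix_(i < 2, j < 2)
    if i == ord0 then (if j == ord0 then 1 + lam * p k else - lam ^+ 2 * cexp (x k))
    else (if j == ord0 then cexp (- x k) else 0).

Definition Tmat (R : realType) (N : nat) (x p : nat -> R[i]) (lam : R[i])
  : 'M[R[i]]_2 :=
  \prod_(i < N) Lmat x p lam (N - i).

From HB Require Import structures.
From mathcomp Require Import all_boot all_order all_algebra.
From mathcomp Require Import complex.
From mathcomp Require Import reals sequences exp trigo.
From mathcomp Require Import ring.
Import Order.TTheory GRing.Theory Num.Theory.
Local Open Scope ring_scope.
Local Open Scope complex_scope.

(* The Backlund relation for p_k says exactly that the Lax matrix L_k maps the
   column (1, e^(-xt_(k-1))) to e^(xt_k - x_k) times (1, e^(-xt_k)).  Chaining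
   these N relations, T_N maps the first column to prod_k e^(xt_k - x_k) times
   the last one.  In the periodic case first and last columns coincide, giving
   an eigenvector; in the open-end case the first column is replaced by (1, 0)
   (this encodes the missing term of p_1), and the first entry of the chain
   identity reads off the (1,1)-entry of T_N. *)

Lemma eigenvalue_trmx (F : fieldType) n (A : 'M[F]_n) (a : F) :
  eigenvalue A^T a = eigenvalue A a.
Proof.
rewrite /eigenvalue /eigenspace -!mxrank_eq0 !mxrank_ker.
have -> : A^T - a%:M = (A - a%:M)^T by rewrite linearB /= tr_scalar_mx.
by rewrite mxrank_tr.
Qed.

Lemma mulmx_prod_chain (K : comNzRingType) m (L : nat -> 'M[K]_m)
    (a : nat -> K) (w : nat -> 'cV[K]_m) n :
  (forall k, (1 <= k <= n)%N -> L k *m w k.-1 = a k *: w k) ->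
  (\prod_(i < n) L (n - i)%N) *m w 0%N = (\prod_(1 <= k < n.+1) a k) *: w n.
Proof.
elim: n => [|n IHn] Lw; first by rewrite big_ord0 big_geq // mul1mx scale1r.
rewrite big_ord_recl big_nat_recr //= -mulmxE -mulmxA subn0.
rewrite IHn; last by move=> k /andP[k_ge1 k_le_n]; rewrite Lw // k_ge1 ltnW.
by rewrite -scalemxAr Lw ?leqnn // scalerA mulrC.
Qed.

Section LaxMatrix.
Variable R : realType.

Lemma cexpD (a b : R[i]) : cexp (a + b) = cexp a * cexp b.
Proof.
case: a => a1 a2; case: b => b1 b2.
rewrite /cexp /= expRD cosD sinD.
by apply/eqP; rewrite eq_complex /=; apply/andP; split; apply/eqP; ring.
Qed.

Lemma cexp0 : cexp (0 : R[i]) = 1.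
Proof. by rewrite /cexp /= expR0 cos0 sin0 mulr1 mulr0. Qed.

Lemma cexpNK (a : R[i]) : cexp (- a) * cexp a = 1.
Proof. by rewrite -cexpD addNr cexp0. Qed.

Definition lax_col (c : R[i]) : 'cV[R[i]]_2 :=
  \col_i (if i == ord0 then 1 else c).

Lemma Lmat_lax_col (x p xt : nat -> R[i]) (lam c : R[i]) (k : nat) :
  lam != 0 ->
  p k = lam^-1 * (cexp (xt k - x k) - 1) + lam * cexp (x k) * c ->
  Lmat x p lam k *m lax_col c = cexp (xt k - x k) *: lax_col (cexp (- xt k)).
Proof.
move=> lam_neq0 p_k; apply/matrixP => i j.
rewrite !mxE big_ord_recl big_ord1 !mxE /=.
have xK := cexpNK (x k); have xtK := cexpNK (xt k).
case: i => [[|[|//]]] ? /=.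
- by rewrite p_k mulrDr !mulrA divff // mul1r; ring.
- by rewrite mul0r addr0 mulr1 addrC cexpD -mulrA [cexp (xt k) * _]mulrC xtK mulr1.
Qed.

Lemma Tmat_periodic_eigenvalue (N : nat) (lam : R[i]) (x p xt : nat -> R[i]) :
  lam != 0 -> xt 0%N = xt N ->
  (forall k, (1 <= k <= N)%N ->
     p k = lam^-1 * (cexp (xt k - x k) - 1) + lam * cexp (x k - xt k.-1)) ->
  eigenvalue (Tmat N x p lam) (\prod_(1 <= k < N.+1) cexp (xt k - x k)).
Proof.
move=> lam_neq0 xt0 p_eq.
pose w k := lax_col (cexp (- xt k)).
have Tw : Tmat N x p lam *m w N
          = (\prod_(1 <= k < N.+1) cexp (xt k - x k)) *: w N.
  have w0 : w 0%N = w N by rewrite /w xt0.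
  rewrite /Tmat -{1}w0; apply: (@mulmx_prod_chain _ _ _ _ w) => k k_in.
  by apply: Lmat_lax_col => //; rewrite p_eq // [cexp (x _ - _)]cexpD mulrA.
(* [eigenvalue] is defined through row eigenvectors, hence the transpose. *)
rewrite -eigenvalue_trmx; apply/eigenvalueP; exists (w N)^T.
  by rewrite -trmx_mul Tw linearZ.
apply/eqP => /matrixP /(_ ord0 ord0) /eqP; rewrite !mxE /=.
by rewrite oner_eq0.
Qed.

Lemma Tmat_open_end_entry (N : nat) (lam : R[i]) (x p xt : nat -> R[i]) :
  (0 < N)%N -> lam != 0 ->
  p 1%N = lam^-1 * (cexp (xt 1%N - x 1%N) - 1) ->
  (forall k, (2 <= k <= N)%N ->
     p k = lam^-1 * (cexp (xt k - x k) - 1) + lam * cexp (x k - xt k.-1)) ->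
  \prod_(1 <= k < N.+1) cexp (xt k - x k) = Tmat N x p lam ord0 ord0.
Proof.
move=> N_gt0 lam_neq0 p_1 p_eq.
pose w k := if k == 0%N then lax_col 0 else lax_col (cexp (- xt k)).
have Tw : Tmat N x p lam *m w 0%N
          = (\prod_(1 <= k < N.+1) cexp (xt k - x k)) *: w N.
  rewrite /Tmat; apply: (@mulmx_prod_chain _ _ _ _ w) => -[|[|k]] // k_in; apply: Lmat_lax_col => //.
    by rewrite p_1 mulr0 addr0.
  by rewrite p_eq // [cexp (x _ - _)]cexpD mulrA.
move/matrixP: Tw => /(_ ord0 ord0).
rewrite /w eqxx (gtn_eqF N_gt0) !mxE big_ord_recl big_ord1 !mxE /=.
by rewrite mulr1 mulr0 addr0 mulr1.
Qed.

End LaxMatrix.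

Theorem theorem3 (R : realType) (N : nat) (lam : R[i]) (x p xt : nat -> R[i]) :
  (2 <= N)%N -> lam != 0 ->
  ((xt 0%N = xt N) ->
   (forall k : nat, (1 <= k <= N)%N ->
      p k = lam^-1 * (cexp (xt k - x k) - 1) + lam * cexp (x k - xt k.-1)) ->
   eigenvalue (Tmat N x p lam) (\prod_(1 <= k < N.+1) cexp (xt k - x k)))
  /\
  (p 1%N = lam^-1 * (cexp (xt 1%N - x 1%N) - 1) ->
   (forall k : nat, (2 <= k <= N)%N ->
      p k = lam^-1 * (cexp (xt k - x k) - 1) + lam * cexp (x k - xt k.-1)) ->
   \prod_(1 <= k < N.+1) cexp (xt k - x k) = Tmat N x p lam ord0 ord0).
Proof.
move=> N_ge2 lam_neq0; split.
- exact: Tmat_periodic_eigenvalue.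
- by apply: Tmat_open_end_entry => //; apply: leq_trans N_ge2.
Qed.
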